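(* Consider the averaged buck converter $-L\dot I=V-uV_s$, $C\dot V=I-GV$ with scalar constants $L>0$, $C>0$, $G\ge0$, and a known constant $V_s\neq0$. Assume there exist constants $V^\star>0$, $\bar u\in(0,1)$, $\bar I$ with $0=V^\star-\bar uV_s$ and $0=\bar I-GV^\star$. Consider the dynamic controller $$\dot u=-\frac1{k_d}\big(k_i(u-\bar u)+V_s\dot I\big),$$ with $k_d>0$, $k_i>0$. Then the solution $(I,V,u)$ of the closed-loop system asymptotically converges to $(\bar I,V^\star,\bar u)$.
   Context: $I$ is the inductor current, $V$ the capacitor voltage, $u$ the duty cycle (treated as a state of the closed loop); $I,V,\dot I$ are assumed measured. *)

From Stdlib Require Import Reals.
From Coquelicot Require Import Coquelicot.

(* In the error coordinates p = I - Ibar, q = V - Vstar, r = u - ubar the equilibrium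
   relations turn the closed loop into the linear system
     L p' = Vs r - q,   C q' = p - G q,   kd r' = - (ki r + Vs p').
   Since (kd r + Vs p)' = - ki r, the storage function
     H = L p^2/2 + C q^2/2 + (kd r + Vs p)^2 / (2 ki)
   satisfies H' = - G q^2 - kd r^2, which is only negative semidefinite.  The cross term
   W = L C p q - theta C q (kd r + Vs p), with theta Vs = L (1 + lam) and lam L G^2 <= C,
   has W' <= - (lam L / 4) p^2 - (C / 4) q^2 + O(r^2).  Hence for small eps > 0 the
   function F = H + eps W is comparable to H and satisfies F' <= - k F, so F and the
   squared errors decay like exp (- k t). *)

From Stdlib Require Import Reals Lra.
From Coquelicot Require Import Coquelicot.
Open Scope R_scope.

Lemma young (c al be x y : R) :
  0 < al -> 0 <= be -> c^2 <= 4 * al * be -> c * x * y <= al * x^2 + be * y^2.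
Proof.
  intros Hal Hbe Hc.
  assert (Hsq : al * (al * x^2 + be * y^2 - c * x * y)
                = (al * x - c * y / 2)^2 + (al * be - c^2 / 4) * y^2) by field.
  assert (0 <= (al * be - c^2 / 4) * y^2) by (apply Rmult_le_pos; nra).
  pose proof (pow2_ge_0 (al * x - c * y / 2)).
  nra.
Qed.

Lemma derive_nonpos_le (f : R -> R) (a b : R) :
  a <= b -> (forall t, a <= t <= b -> exists d, is_derive f t d /\ d <= 0) ->
  f b <= f a.
Proof.
  intros Hab Hder.
  destruct (Req_dec a b) as [<-|Hne]; [lra|].
  assert (Hf : forall t, a <= t <= b -> is_derive f t (Derive f t) /\ Derive f t <= 0).
  { intros t Ht. destruct (Hder t Ht) as (d & Hd & Hle).
    rewrite (is_derive_unique _ _ _ Hd). auto. }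
  destruct (MVT_gen f a b (Derive f)) as (c & Hc & Heq);
    rewrite Rmin_left, Rmax_right in * by lra.
  - intros t Ht. apply Hf. lra.
  - intros t Ht. apply continuity_pt_filterlim.
    apply (@ex_derive_continuous R_AbsRing R_NormedModule).
    eexists. apply Hf, Ht.
  - assert (Derive f c <= 0) by (apply Hf, Hc). nra.
Qed.

Lemma exp_decay_of_derive_le (f : R -> R) (k : R) :
  (forall t, 0 <= t -> exists d, is_derive f t d /\ d <= - k * f t) ->
  forall t, 0 <= t -> f t <= f 0 * exp (- k * t).
Proof.
  intros Hder t Ht.
  set (g := fun s => f s * exp (k * s)).
  assert (Hg : g t <= g 0).
  { apply derive_nonpos_le; [exact Ht|]. intros s Hs.
    destruct (Hder s (proj1 Hs)) as (d & Hd & Hle).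
    exists ((d + k * f s) * exp (k * s)). split.
    - unfold g. auto_derive; [eexists; exact Hd|].
      replace (Derive (fun x => f x) s) with d by (symmetry; now apply is_derive_unique).
      ring.
    - pose proof (exp_pos (k * s)). nra. }
  assert (Hexp : exp (k * t) * exp (- k * t) = 1).
  { rewrite <- exp_plus, <- exp_0. f_equal. ring. }
  unfold g in Hg. rewrite Rmult_0_r, exp_0, Rmult_1_r in Hg.
  pose proof (exp_pos (- k * t)).
  replace (f t) with (f t * exp (k * t) * exp (- k * t)) by (rewrite Rmult_assoc, Hexp; ring).
  apply Rmult_le_compat_r; lra.
Qed.

Lemma is_lim_sqr_le_exp (f : R -> R) (l M k : R) :
  0 < k -> (forall t, 0 <= t -> (f t - l)^2 <= M * exp (- k * t)) ->
  is_lim f p_infty l.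
Proof.
  intros Hk Hbound. apply is_lim_spec. intros [e He]; simpl.
  exists (Rmax 0 (M / (k * e^2))). intros t Ht.
  assert (Ht0 : 0 < t) by (eapply Rle_lt_trans; [apply Rmax_l|exact Ht]).
  assert (HtM : M / (k * e^2) < t) by (eapply Rle_lt_trans; [apply Rmax_r|exact Ht]).
  assert (Hke : 0 < k * e^2) by (apply Rmult_lt_0_compat; [lra|apply pow_lt; lra]).
  assert (HM : M < e^2 * (k * t)).
  { apply Rmult_lt_compat_l with (r := k * e^2) in HtM; [|exact Hke].
    field_simplify in HtM; lra. }
  assert (Hexp : k * t < exp (k * t)) by (pose proof (exp_ineq1_le (k * t)); lra).
  assert (Hinv : exp (- k * t) * exp (k * t) = 1).
  { rewrite <- exp_plus, <- exp_0. f_equal. ring. }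
  destruct (Rlt_or_le (Rabs (f t - l)) e) as [|Hge]; [assumption|exfalso].
  assert (e^2 <= (f t - l)^2) by (rewrite <- (pow2_abs (f t - l)); apply pow_incr; lra).
  specialize (Hbound t (Rlt_le _ _ Ht0)).
  assert (e^2 * exp (k * t) <= M).
  { replace M with (M * exp (- k * t) * exp (k * t)) by (rewrite Rmult_assoc, Hinv; ring).
    apply Rmult_le_compat_r; [pose proof (exp_pos (k * t)); lra|lra]. }
  pose proof (pow2_ge_0 e). nra.
Qed.

Lemma is_derive_sub_const (f : R -> R) (c t d : R) :
  is_derive f t d -> is_derive (fun s => f s - c) t d.
Proof.
  intros Hf. auto_derive; [eexists; exact Hf|].
  replace (Derive (fun x => f x) t) with d by (symmetry; now apply is_derive_unique).
  ring.
Qed.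

Lemma le_opp_min_ratio_mul (D F x y w m1 m2 m3 M1 M2 M3 : R) :
  0 <= x -> 0 <= y -> 0 <= w -> 0 <= m1 -> 0 <= m2 -> 0 <= m3 ->
  0 < M1 -> 0 < M2 -> 0 < M3 ->
  D <= - (m1 * x + m2 * y + m3 * w) -> F <= M1 * x + M2 * y + M3 * w ->
  D <= - Rmin (m1 / M1) (Rmin (m2 / M2) (m3 / M3)) * F.
Proof.
  intros Hx Hy Hw Hm1 Hm2 Hm3 HM1 HM2 HM3 HD HF.
  set (k := Rmin (m1 / M1) (Rmin (m2 / M2) (m3 / M3))).
  assert (Hratio : forall m M, 0 < M -> k <= m / M -> k * M <= m).
  { intros m M HM Hle. apply (Rmult_le_compat_r M) in Hle; [|lra].
    replace (m / M * M) with m in Hle by (field; lra). exact Hle. }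
  assert (Hk1 : k * M1 <= m1) by (apply Hratio; [lra|apply Rmin_l]).
  assert (Hk2 : k * M2 <= m2)
    by (apply Hratio; [lra|eapply Rle_trans; [apply Rmin_r|apply Rmin_l]]).
  assert (Hk3 : k * M3 <= m3)
    by (apply Hratio; [lra|eapply Rle_trans; [apply Rmin_r|apply Rmin_r]]).
  assert (Hk : 0 <= k).
  { unfold k. repeat apply Rmin_glb; apply Rdiv_le_0_compat; assumption. }
  assert (k * F <= k * (M1 * x + M2 * y + M3 * w)) by (apply Rmult_le_compat_l; lra).
  assert (k * M1 * x <= m1 * x) by (apply Rmult_le_compat_r; lra).
  assert (k * M2 * y <= m2 * y) by (apply Rmult_le_compat_r; lra).
  assert (k * M3 * w <= m3 * w) by (apply Rmult_le_compat_r; lra).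
  lra.
Qed.

Lemma exists_pos_mul_le2 (A B a b : R) : 0 < A -> 0 < B -> 0 < a -> 0 < b ->
  exists e, 0 < e /\ e * A <= a /\ e * B <= b.
Proof.
  intros HA HB Ha Hb. exists (Rmin (a / A) (b / B)). repeat split.
  - apply Rmin_glb_lt; apply Rdiv_lt_0_compat; assumption.
  - apply Rle_trans with (a / A * A); [|right; field; lra].
    apply Rmult_le_compat_r; [lra|apply Rmin_l].
  - apply Rle_trans with (b / B * B); [|right; field; lra].
    apply Rmult_le_compat_r; [lra|apply Rmin_r].
Qed.

Section ErrorDynamics.

Variables L C G Vs kd ki : R.
Hypotheses (HL : 0 < L) (HC : 0 < C) (HG : 0 <= G) (HVs : Vs <> 0)
  (Hkd : 0 < kd) (Hki : 0 < ki).

Definition energy (p q r : R) : R :=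
  L * p^2 / 2 + C * q^2 / 2 + (kd * r + Vs * p)^2 / (2 * ki).

Definition lam : R := C / (C + L * G^2).
Definition theta : R := L * (1 + lam) / Vs.

Definition cross (p q r : R) : R :=
  L * C * p * q - theta * C * q * (kd * r + Vs * p).

Definition cross_dot (p q r : R) : R :=
  - lam * L * p^2 - C * q^2 + lam * L * G * p * q
  + (Vs * C + theta * (kd * G + ki * C)) * q * r - theta * kd * p * r.

Definition lyap (eps p q r : R) : R := energy p q r + eps * cross p q r.

Definition lyap_dot (eps p q r : R) : R :=
  - G * q^2 - kd * r^2 + eps * cross_dot p q r.

Section Trajectory.

Variables (x y z : R -> R) (t dx dy dz : R).
Hypotheses (Hx : is_derive x t dx) (Hy : is_derive y t dy) (Hz : is_derive z t dz)
  (Ex : L * dx = Vs * z t - y t) (Ey : C * dy = x t - G * y t)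
  (Ez : kd * dz = - (ki * z t + Vs * dx)).

Let Dx : Derive (fun s => x s) t = dx. Proof. now apply is_derive_unique. Qed.
Let Dy : Derive (fun s => y s) t = dy. Proof. now apply is_derive_unique. Qed.
Let Dz : Derive (fun s => z s) t = dz. Proof. now apply is_derive_unique. Qed.

Let Edx : dx = (Vs * z t - y t) / L. Proof. rewrite <- Ex. field. lra. Qed.
Let Edy : dy = (x t - G * y t) / C. Proof. rewrite <- Ey. field. lra. Qed.
Let Edz : dz = - (ki * z t + Vs * dx) / kd. Proof. rewrite <- Ez. field. lra. Qed.

Lemma energy_derive :
  is_derive (fun s => energy (x s) (y s) (z s)) t (- G * y t ^ 2 - kd * z t ^ 2).
Proof.
  unfold energy. auto_derive.
  - repeat split; eexists; eassumption.
  - rewrite Dx, Dy, Dz, Edz, Edy, Edx. field. lra.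
Qed.

Lemma cross_derive :
  is_derive (fun s => cross (x s) (y s) (z s)) t (cross_dot (x t) (y t) (z t)).
Proof.
  unfold cross, cross_dot, theta. auto_derive.
  - repeat split; eexists; eassumption.
  - rewrite Dx, Dy, Dz, Edz, Edy, Edx. field. lra.
Qed.

Lemma lyap_derive (eps : R) :
  is_derive (fun s => lyap eps (x s) (y s) (z s)) t (lyap_dot eps (x t) (y t) (z t)).
Proof.
  apply (is_derive_plus (fun s => energy (x s) (y s) (z s))
                        (fun s => eps * cross (x s) (y s) (z s))).
  - exact energy_derive.
  - apply (is_derive_scal (fun s => cross (x s) (y s) (z s))), cross_derive.
Qed.

End Trajectory.

Lemma lam_pos : 0 < lam.
Proof.
  unfold lam. assert (0 <= L * G^2) by (apply Rmult_le_pos; [lra|apply pow2_ge_0]).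
  apply Rdiv_lt_0_compat; lra.
Qed.

Lemma lam_L_G2_le : lam * L * G^2 <= C.
Proof.
  unfold lam. assert (0 <= L * G^2) by (apply Rmult_le_pos; [lra|apply pow2_ge_0]).
  apply (Rmult_le_reg_r (C + L * G^2)); [lra|].
  replace (C / (C + L * G^2) * L * G^2 * (C + L * G^2)) with (C * (L * G^2)) by (field; lra).
  nra.
Qed.

Lemma theta_neq0 : theta <> 0.
Proof.
  pose proof lam_pos. unfold theta.
  apply Rmult_integral_contrapositive_currified; [nra|].
  now apply Rinv_neq_0_compat.
Qed.

Definition cross_gain : R :=
  (Vs * C + theta * (kd * G + ki * C))^2 / C + theta^2 * kd^2 / (lam * L).

Lemma cross_dot_le (p q r : R) :
  cross_dot p q r <= - (lam * L / 4) * p^2 - (C / 4) * q^2 + cross_gain * r^2.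
Proof.
  pose proof lam_pos as Hlam. pose proof lam_L_G2_le as HlamG.
  assert (Hpq : lam * L * G * p * q <= lam * L / 2 * p^2 + C / 2 * q^2).
  { apply young; [nra|lra|].
    replace ((lam * L * G)^2) with (lam * L * (lam * L * G^2)) by ring.
    replace (4 * (lam * L / 2) * (C / 2)) with (lam * L * C) by field.
    apply Rmult_le_compat_l; nra. }
  assert (Hqr : (Vs * C + theta * (kd * G + ki * C)) * q * r
                <= C / 4 * q^2 + (Vs * C + theta * (kd * G + ki * C))^2 / C * r^2).
  { apply young; [lra| |right; field; lra].
    apply Rdiv_le_0_compat; [apply pow2_ge_0|lra]. }
  assert (Hpr : - (theta * kd) * p * r <= lam * L / 4 * p^2 + theta^2 * kd^2 / (lam * L) * r^2).
  { apply young; [nra| |right; field; lra].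
    apply Rdiv_le_0_compat; nra. }
  unfold cross_dot, cross_gain. nra.
Qed.

Definition cross_bound : R := L + C + (1 + theta^2) * (ki + C).

Lemma energy_nonneg (p q r : R) : 0 <= energy p q r.
Proof.
  unfold energy.
  assert (0 <= (kd * r + Vs * p)^2 / (2 * ki))
    by (apply Rdiv_le_0_compat; [apply pow2_ge_0|lra]).
  pose proof (pow2_ge_0 p). pose proof (pow2_ge_0 q). nra.
Qed.

Lemma signed_cross_le (s p q r : R) :
  s^2 = 1 -> s * cross p q r <= cross_bound * energy p q r.
Proof.
  intros Hs. set (w := kd * r + Vs * p).
  assert (Hpq : s * (L * C) * p * q <= L * C / 2 * p^2 + L * C / 2 * q^2).
  { apply young; [nra|nra|]. replace ((s * (L * C))^2) with ((L * C)^2) by nra. nra. }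
  assert (Hqw : - (s * theta * C) * q * w
                <= (1 + theta^2) * ki * C / 2 * q^2 + (1 + theta^2) * C / (2 * ki) * w^2).
  { pose proof (pow2_ge_0 theta).
    apply young.
    - repeat apply Rmult_lt_0_compat; lra.
    - apply Rdiv_le_0_compat; [apply Rmult_le_pos|]; lra.
    - replace (4 * ((1 + theta^2) * ki * C / 2) * ((1 + theta^2) * C / (2 * ki)))
        with ((1 + theta^2)^2 * C^2) by (field; lra).
      replace ((- (s * theta * C))^2) with (theta^2 * C^2) by nra.
      apply Rmult_le_compat_r; [apply pow2_ge_0|nra]. }
  assert (Hcoef : cross_bound * energy p q r - (L * C / 2 * p^2 + L * C / 2 * q^2
            + (1 + theta^2) * ki * C / 2 * q^2 + (1 + theta^2) * C / (2 * ki) * w^2)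
          = (cross_bound - C) * (L * p^2 / 2)
            + (cross_bound - L - (1 + theta^2) * ki) * (C * q^2 / 2)
            + (cross_bound - (1 + theta^2) * C) * (w^2 / (2 * ki))).
  { unfold energy, cross_bound. fold w. field. lra. }
  assert (0 <= w^2 / (2 * ki)) by (apply Rdiv_le_0_compat; [apply pow2_ge_0|lra]).
  pose proof (pow2_ge_0 theta). pose proof (pow2_ge_0 p). pose proof (pow2_ge_0 q).
  assert (0 <= (cross_bound - C) * (L * p^2 / 2))
    by (unfold cross_bound; apply Rmult_le_pos; nra).
  assert (0 <= (cross_bound - L - (1 + theta^2) * ki) * (C * q^2 / 2))
    by (unfold cross_bound; apply Rmult_le_pos; nra).
  assert (0 <= (cross_bound - (1 + theta^2) * C) * (w^2 / (2 * ki)))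
    by (unfold cross_bound; apply Rmult_le_pos; nra).
  unfold cross. fold w. lra.
Qed.

Lemma abs_cross_le (p q r : R) : Rabs (cross p q r) <= cross_bound * energy p q r.
Proof.
  apply Rabs_le. split.
  - pose proof (signed_cross_le (-1) p q r ltac:(ring)). lra.
  - pose proof (signed_cross_le 1 p q r ltac:(ring)). lra.
Qed.

Lemma energy_le_sq (p q r : R) :
  energy p q r <= (L / 2 + Vs^2 / ki) * p^2 + C / 2 * q^2 + kd^2 / ki * r^2.
Proof.
  assert (Hw : (kd * r + Vs * p)^2 <= 2 * kd^2 * r^2 + 2 * Vs^2 * p^2)
    by (pose proof (pow2_ge_0 (kd * r - Vs * p)); nra).
  assert (Hw' : (kd * r + Vs * p)^2 / (2 * ki) <= (2 * kd^2 * r^2 + 2 * Vs^2 * p^2) / (2 * ki))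
    by (apply Rmult_le_compat_r; [left; apply Rinv_0_lt_compat|]; lra).
  unfold energy.
  replace ((L / 2 + Vs^2 / ki) * p^2 + C / 2 * q^2 + kd^2 / ki * r^2)
    with (L * p^2 / 2 + C * q^2 / 2 + (2 * kd^2 * r^2 + 2 * Vs^2 * p^2) / (2 * ki))
    by (field; lra).
  lra.
Qed.

Lemma sq_le_energy (p q r : R) :
  p^2 + q^2 + r^2 <= (2 / L + 2 / C + 4 * (ki + Vs^2 / L) / kd^2) * energy p q r.
Proof.
  set (H := energy p q r). set (w := kd * r + Vs * p).
  assert (HH : H = L * p^2 / 2 + C * q^2 / 2 + w^2 / (2 * ki)) by reflexivity.
  assert (Hw : 0 <= w^2 / (2 * ki))
    by (apply Rdiv_le_0_compat; [apply pow2_ge_0|lra]).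
  pose proof (pow2_ge_0 p). pose proof (pow2_ge_0 q).
  assert (Hp : p^2 <= 2 / L * H).
  { apply (Rmult_le_reg_l (L / 2)); [lra|].
    replace (L / 2 * (2 / L * H)) with H by (field; lra). nra. }
  assert (Hq : q^2 <= 2 / C * H).
  { apply (Rmult_le_reg_l (C / 2)); [lra|].
    replace (C / 2 * (2 / C * H)) with H by (field; lra). nra. }
  assert (Hw2 : w^2 <= 2 * ki * H).
  { replace (w^2) with (2 * ki * (w^2 / (2 * ki))) by (field; lra).
    apply Rmult_le_compat_l; nra. }
  assert (Hr : kd^2 * r^2 <= 2 * w^2 + 2 * Vs^2 * p^2).
  { replace (kd^2 * r^2) with ((w - Vs * p)^2) by (unfold w; ring).
    pose proof (pow2_ge_0 (w + Vs * p)). nra. }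
  assert (Hr' : r^2 <= 4 * (ki + Vs^2 / L) / kd^2 * H).
  { apply (Rmult_le_reg_l (kd^2)); [nra|].
    replace (kd^2 * (4 * (ki + Vs^2 / L) / kd^2 * H)) with (2 * (2 * ki * H) + 2 * Vs^2 * (2 / L * H))
      by (field; lra).
    pose proof (pow2_ge_0 Vs). nra. }
  lra.
Qed.

Lemma lyap_dot_le (eps p q r : R) : 0 <= eps -> eps * cross_gain <= kd / 2 ->
  lyap_dot eps p q r <= - (eps * lam * L / 4) * p^2 - (eps * C / 4) * q^2 - kd / 2 * r^2.
Proof.
  intros Heps Hgain.
  pose proof (cross_dot_le p q r) as Hcross.
  assert (Hscaled : eps * cross_dot p q r
            <= eps * (- (lam * L / 4) * p^2 - (C / 4) * q^2 + cross_gain * r^2))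
    by (apply Rmult_le_compat_l; lra).
  assert (Hr : eps * cross_gain * r^2 <= kd / 2 * r^2)
    by (apply Rmult_le_compat_r; [apply pow2_ge_0|lra]).
  assert (0 <= G * q^2) by (apply Rmult_le_pos; [lra|apply pow2_ge_0]).
  unfold lyap_dot. nra.
Qed.

Lemma lyap_between_energy (eps p q r : R) : 0 <= eps -> eps * cross_bound <= 1 / 2 ->
  energy p q r / 2 <= lyap eps p q r <= 3 / 2 * energy p q r.
Proof.
  intros Heps Hbound.
  pose proof (abs_cross_le p q r) as Habs. pose proof (energy_nonneg p q r).
  assert (Hsmall : Rabs (eps * cross p q r) <= energy p q r / 2).
  { rewrite Rabs_mult, (Rabs_pos_eq eps Heps).
    apply Rle_trans with (eps * (cross_bound * energy p q r)); [apply Rmult_le_compat_l; lra|].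
    nra. }
  apply Rabs_le_between in Hsmall. unfold lyap. lra.
Qed.

Lemma cross_bound_pos : 0 < cross_bound.
Proof. unfold cross_bound. pose proof (pow2_ge_0 theta). nra. Qed.

Lemma cross_gain_pos : 0 < cross_gain.
Proof.
  pose proof lam_pos.
  assert (0 < theta^2) by (rewrite <- Rsqr_pow2; apply Rsqr_pos_lt, theta_neq0).
  assert (0 <= (Vs * C + theta * (kd * G + ki * C))^2 / C)
    by (apply Rdiv_le_0_compat; [apply pow2_ge_0|lra]).
  assert (0 < theta^2 * kd^2 / (lam * L)).
  { apply Rdiv_lt_0_compat; [apply Rmult_lt_0_compat; [|apply pow_lt]|]; nra. }
  unfold cross_gain. lra.
Qed.

Lemma exists_strict_lyapunov : exists eps k c, 0 < k /\ 0 <= c /\ forall p q r,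
  p^2 + q^2 + r^2 <= c * lyap eps p q r /\ lyap_dot eps p q r <= - k * lyap eps p q r.
Proof.
  pose proof lam_pos as Hlam. pose proof cross_bound_pos. pose proof cross_gain_pos.
  destruct (exists_pos_mul_le2 cross_bound cross_gain (1 / 2) (kd / 2))
    as (eps & Heps & Heps_bound & Heps_gain); try lra.
  assert (Hm1 : 0 < eps * lam * L / 4).
  { apply Rdiv_lt_0_compat; [|lra].
    apply Rmult_lt_0_compat; [apply Rmult_lt_0_compat|]; assumption. }
  assert (Hm2 : 0 < eps * C / 4)
    by (apply Rdiv_lt_0_compat; [apply Rmult_lt_0_compat|]; lra).
  assert (HM1 : 0 < 3 / 2 * (L / 2 + Vs^2 / ki)).
  { assert (0 <= Vs^2 / ki) by (apply Rdiv_le_0_compat; [apply pow2_ge_0|lra]). lra. }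
  assert (HM3 : 0 < 3 / 2 * (kd^2 / ki))
    by (apply Rmult_lt_0_compat; [lra|apply Rdiv_lt_0_compat; nra]).
  set (c0 := 2 / L + 2 / C + 4 * (ki + Vs^2 / L) / kd^2).
  assert (Hc0 : 0 <= c0).
  { assert (0 <= Vs^2 / L) by (apply Rdiv_le_0_compat; [apply pow2_ge_0|lra]).
    assert (0 < 2 / L) by (apply Rdiv_lt_0_compat; lra).
    assert (0 < 2 / C) by (apply Rdiv_lt_0_compat; lra).
    assert (0 <= 4 * (ki + Vs^2 / L) / kd^2)
      by (apply Rdiv_le_0_compat; [lra|apply pow_lt; lra]).
    unfold c0. lra. }
  exists eps, (Rmin ((eps * lam * L / 4) / (3 / 2 * (L / 2 + Vs^2 / ki)))
                (Rmin ((eps * C / 4) / (3 / 2 * (C / 2))) ((kd / 2) / (3 / 2 * (kd^2 / ki))))),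
    (2 * c0).
  split; [repeat apply Rmin_glb_lt; apply Rdiv_lt_0_compat; lra|].
  split; [lra|]. intros p q r.
  destruct (lyap_between_energy eps p q r) as [Hlow Hupp]; [lra|lra|].
  pose proof (energy_le_sq p q r).
  pose proof (pow2_ge_0 p). pose proof (pow2_ge_0 q). pose proof (pow2_ge_0 r).
  split.
  - assert (c0 * energy p q r <= c0 * (2 * lyap eps p q r))
      by (apply Rmult_le_compat_l; lra).
    pose proof (sq_le_energy p q r) as Hsq. fold c0 in Hsq. lra.
  - apply le_opp_min_ratio_mul with (x := p^2) (y := q^2) (w := r^2); try lra.
    pose proof (lyap_dot_le eps p q r (Rlt_le _ _ Heps) Heps_gain). lra.
Qed.

End ErrorDynamics.

Theorem corollary2
  (L C G Vs Vstar ubar Ibar kd ki : R)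
  (HL : 0 < L) (HC : 0 < C) (HG : 0 <= G) (HVs : Vs <> 0)
  (HVstar : 0 < Vstar) (Hubar : 0 < ubar < 1)
  (Heq1 : 0 = Vstar - ubar * Vs) (Heq2 : 0 = Ibar - G * Vstar)
  (Hkd : 0 < kd) (Hki : 0 < ki)
  (I V u : R -> R)
  (Hsol : forall t : R, 0 <= t ->
     exists dI dV : R,
       is_derive I t dI /\ is_derive V t dV /\
       - L * dI = V t - u t * Vs /\
       C * dV = I t - G * V t /\
       is_derive u t (- (1 / kd) * (ki * (u t - ubar) + Vs * dI))) :
  is_lim I p_infty (Finite Ibar) /\
  is_lim V p_infty (Finite Vstar) /\
  is_lim u p_infty (Finite ubar).
Proof.
  destruct (exists_strict_lyapunov L C G Vs kd ki HL HC HG HVs Hkd Hki)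
    as (eps & k & c & Hk & Hc & Hlyap).
  set (F := fun t => lyap L C G Vs kd ki eps (I t - Ibar) (V t - Vstar) (u t - ubar)).
  assert (HF : forall t, 0 <= t -> exists d, is_derive F t d /\ d <= - k * F t).
  { intros t Ht. destruct (Hsol t Ht) as (dI & dV & HI & HV & EI & EV & Hu).
    eexists. split; [|apply Hlyap].
    apply (lyap_derive L C G Vs kd ki HL HC HVs Hkd Hki
             (fun s => I s - Ibar) (fun s => V s - Vstar) (fun s => u s - ubar)
             t dI dV (- (1 / kd) * (ki * (u t - ubar) + Vs * dI)));
      try (apply is_derive_sub_const; assumption); cbv beta; [lra|lra|field; lra]. }
  assert (Hsq : forall t, 0 <= t ->
    (I t - Ibar)^2 + (V t - Vstar)^2 + (u t - ubar)^2 <= c * F 0 * exp (- k * t)).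
  { intros t Ht. rewrite Rmult_assoc.
    eapply Rle_trans; [apply Hlyap|]. apply Rmult_le_compat_l; [exact Hc|].
    exact (exp_decay_of_derive_le F k HF t Ht). }
  repeat split; apply (is_lim_sqr_le_exp _ _ (c * F 0) k Hk); intros t Ht;
    specialize (Hsq t Ht); pose proof (pow2_ge_0 (I t - Ibar));
    pose proof (pow2_ge_0 (V t - Vstar)); pose proof (pow2_ge_0 (u t - ubar)); lra.
Qed.
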